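(* Let $G$ be a Feynman diagram and $A_G$ the support of $\mathcal{F}_{z,m}$ for generic $(z,m)\in\mathbb{R}^K\times\mathbb{R}^{\mathcal{E}}$. Then $\mathcal{K}_G\cap\operatorname{int}\mathcal{C}_{A_G}\neq\emptyset$ if and only if $\mathcal{K}_G$ contains a polynomial in which every monomial $x^a$, $a\in A_G$, has strictly positive coefficient.
   Context: $G$ is a connected graph with internal edges $1,\dots,n$ (variables $x_1,\dots,x_n$); $\mathcal{T}$ = spanning trees (as subsets of $[n]$), $\mathcal{W}$ = spanning 2-forests $\{T_1,T_2\}$; $\mathcal{U}(x)=\sum_{T\in\mathcal{T}}\prod_{e\notin T}x_e$. For a linear map $L:\mathbb{R}^K\to\mathbb{R}^{\mathcal{W}}$ and $\mathcal{E}\subseteq[n]$, $\mathcal{F}_{z,m}(x)=\sum_{\{T_1,T_2\}\in\mathcal{W}}L_{T_1,T_2}(z)\prod_{e\notin T_1\sqcup T_2}x_e+\big(\sum_{e\in\mathcal{E}}m_ex_e\big)\mathcal{U}(x)$. The kinematic space is $\mathcal{K}_G=\{\mathcal{F}_{z,m}:(z,m)\in\mathbb{R}^K\times\mathbb{R}^{\mathcal{E}}\}\subseteq\mathbb{R}[x]_{A_G}$, where $\mathbb{R}[x]_{A_G}$ is the space of polynomials with support in $A_G$. $\mathcal{C}_{A_G}=\{g\in\mathbb{R}[x]_{A_G}:g\ge0\text{ on }\mathbb{R}^n_{>0}\}$ and $\operatorname{int}$ is the interior in $\mathbb{R}[x]_{A_G}$. *)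

From HB Require Import structures.
From mathcomp Require Import all_boot all_order all_algebra.
From mathcomp Require Import reals.
From mathcomp Require Import mpoly.
Set Implicit Arguments. Unset Strict Implicit. Unset Printing Implicit Defensive.
Import Order.TTheory GRing.Theory Num.Theory.
Local Open Scope ring_scope.

(* A graph G with vertex set V (a finType) and internal edges 'I_n; edge e has
   endpoints ends e = (u, v) (multi-edges and self-loops allowed). *)
Section Graph.
Variables (V : finType) (n : nat) (ends : 'I_n -> V * V).

Definition adjF (F : {set 'I_n}) : rel V :=
  fun u v => [exists e in F, (ends e == (u, v)) || (ends e == (v, u))].

Definition componentsF (F : {set 'I_n}) : {set {set V}} :=
  [set [set y | connect (adjF F) x y] | x : V].

(* F is a spanning forest with exactly k trees: (V, F) has k connected
   components and is acyclic, i.e. #|F| = #|V| - k. *)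
Definition spanning_forest (k : nat) (F : {set 'I_n}) : bool :=
  (#|componentsF F| == k) && (#|F| + k == #|V|)%N.

Definition spanning_tree (T : {set 'I_n}) : bool := spanning_forest 1 T.
(* a spanning 2-forest {T1,T2} is identified with its edge set T1 ⊔ T2 *)
Definition spanning_2forest (F : {set 'I_n}) : bool := spanning_forest 2 F.

Definition graph_connected : bool := #|componentsF setT| == 1%N.
End Graph.

Section Polys.
Variables (R : realType) (V : finType) (n : nat) (ends : 'I_n -> V * V).

Definition cmono (S : {set 'I_n}) : {mpoly R[n]} :=
  \prod_(e < n | e \notin S) 'X_e.

Definition symanzikU : {mpoly R[n]} :=
  \sum_(T : {set 'I_n} | spanning_tree ends T) cmono T.

(* F_{z,m}; the linear map L : R^K -> R^W is given by its matrix
   L F k (only rows indexed by spanning 2-forests matter). *)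
Definition symanzikF (K : nat) (L : {set 'I_n} -> 'I_K -> R)
    (E : {set 'I_n}) (z : 'I_K -> R) (m : 'I_n -> R) : {mpoly R[n]} :=
  \sum_(F : {set 'I_n} | spanning_2forest ends F)
      (\sum_(k < K) L F k * z k) *: cmono F
  + (\sum_(e in E) m e *: 'X_e) * symanzikU.

(* A_G: support of F_{z,m} for generic (z,m) = union of supports *)
Definition AG (K : nat) (L : {set 'I_n} -> 'I_K -> R) (E : {set 'I_n})
    (a : 'X_{1..n}) : Prop :=
  exists (z : 'I_K -> R) (m : 'I_n -> R), a \in msupp (symanzikF L E z m).

Definition kinspace K L E (g : {mpoly R[n]}) : Prop :=
  exists z m, g = symanzikF (K := K) L E z m.

Definition supported_in (A : 'X_{1..n} -> Prop) (g : {mpoly R[n]}) : Prop :=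
  forall a, a \in msupp g -> A a.

Definition nonneg_cone (A : 'X_{1..n} -> Prop) (g : {mpoly R[n]}) : Prop :=
  supported_in A g /\ forall x : 'I_n -> R, (forall i, 0 < x i) -> 0 <= g.@[x].

(* interior of C_A in the finite-dimensional real space R[x]_A
   (coordinates = coefficients on A; the max-norm topology) *)
Definition interior_cone (A : 'X_{1..n} -> Prop) (g : {mpoly R[n]}) : Prop :=
  nonneg_cone A g /\
  exists eps : R, 0 < eps /\
    forall h : {mpoly R[n]}, supported_in A h ->
      (forall a, A a -> `|h@_a - g@_a| < eps) -> nonneg_cone A h.
End Polys.

From HB Require Import structures.
From mathcomp Require Import all_boot all_order all_algebra.
From mathcomp Require Import reals.
From mathcomp Require Import mpoly.
From mathcomp Require Import lra ring zify.
Set Implicit Arguments. Unset Strict Implicit. Unset Printing Implicit Defensive.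
Import Order.TTheory GRing.Theory Num.Theory.
Local Open Scope ring_scope.

(* If all coefficients of [g] on [A_G] are positive, every polynomial of
   [R[x]_{A_G}] close enough to [g] is coefficientwise nonnegative, so [g] is
   interior to [C_{A_G}].  Conversely, let [F_{z,m}] be interior.  An exponent of
   [A_G] either comes from a mass term [m_e x_e x^{T^c}], and then masses larger
   than all 2-forest coefficients together make its coefficient positive, or it
   is [x^{F^c}] for a 2-forest [F] that no massive edge reconnects into a tree.
   Such an exponent is a vertex of [A_G] and its coefficient does not depend on
   the masses; it must be positive, since an interior polynomial can be lowered
   slightly at that vertex, and a polynomial with a negative coefficient at a
   vertex is negative at [x_i = t ^ w_i] for [t] large. *)

Section MonomialWeights.
Variables (R : realFieldType) (n : nat).
Implicit Types (h : {mpoly R[n]}) (w : 'I_n -> int) (c : 'X_{1..n}).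

Definition mweight w c : int := \sum_i w i * (c i)%:Z.

Lemma prodr_exprz (I : Type) (r : seq I) (P : pred I) (t : R) (f : I -> int) :
  t != 0 -> \prod_(i <- r | P i) t ^ f i = t ^ (\sum_(i <- r | P i) f i).
Proof.
move=> t0; elim/big_rec2: _ => [|i x y _ ->]; first by rewrite expr0z.
by rewrite exprzDr // unitfE.
Qed.

Lemma meval_ge0 h (x : 'I_n -> R) :
  (forall c, c \in msupp h -> 0 <= h@_c) -> (forall i, 0 < x i) -> 0 <= h.@[x].
Proof.
move=> h_ge0 x_gt0; rewrite mevalE big_seq; apply: sumr_ge0 => c c_in.
by apply: mulr_ge0; [exact: h_ge0 | apply: prodr_ge0 => i _; rewrite exprn_ge0 ?ltW].
Qed.

(* Evaluating at [x_i = t ^ w i] weights the monomial [x^c] by [t ^ mweight w c];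
   for [t] large the strictly heaviest monomial dominates the others. *)
Lemma meval_lt0_at_vertex h b w :
  h@_b < 0 -> (forall c, c \in msupp h -> c != b -> mweight w c < mweight w b) ->
  exists2 x : 'I_n -> R, forall i, 0 < x i & h.@[x] < 0.
Proof.
move=> hb_lt0 vertex_b.
set M := \sum_(c <- msupp h) `|h@_c|.
have M_ge0 : 0 <= M by apply: sumr_ge0.
set t := M / - h@_b + 2.
have t_gt1 : 1 < t.
  have : 0 <= M / - h@_b by rewrite divr_ge0 // oppr_ge0 ltW.
  by rewrite /t; lra.
have t_gt0 : 0 < t by apply: lt_trans t_gt1.
have t_neq0 : t != 0 by rewrite gt_eqF.
exists (fun i => t ^ w i) => [i|]; first exact: exprz_gt0.
have evalX c : \prod_i (t ^ w i) ^+ c i = t ^ mweight w c.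
  by rewrite -prodr_exprz //; apply: eq_bigr => i _; rewrite -exprz_exp.
have b_in : b \in msupp h by rewrite mcoeff_msupp lt_eqF.
set k := mweight w b.
have others_le : \sum_(c <- msupp h | c != b) h@_c * \prod_i (t ^ w i) ^+ c i
    <= M * t ^ (k - 1).
  rewrite /M mulr_suml (bigD1_seq b) ?msupp_uniq //= -[X in X <= _]add0r.
  apply: lerD; first by rewrite mulr_ge0 // exprz_ge0 // ltW.
  rewrite big_seq_cond [X in _ <= X]big_seq_cond; apply: ler_sum.
  move=> c /andP[c_in c_neq]; rewrite evalX.
  apply: le_trans (ler_norm _) _; rewrite normrM (ger0_norm (exprz_ge0 _ (ltW t_gt0))).
  apply: ler_wpM2l => //; apply: ler_weXz2l; first exact: ltW.
  by rewrite lerBrDr lezD1 vertex_b.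
rewrite mevalE (bigD1_seq b) ?msupp_uniq //= evalX.
apply: le_lt_trans (lerD (lexx _) others_le) _.
have -> : t ^ k = t ^ (k - 1) * t.
  by rewrite -[t in RHS]expr1z -exprzDr ?unitfE // subrK.
rewrite mulrCA [M * _]mulrC -mulrDr pmulr_rlt0 ?exprz_gt0 //.
have hbM : h@_b * (M / - h@_b) = - M by field; rewrite lt_eqF.
by rewrite /t mulrDr hbM; lra.
Qed.

Lemma exists_pos_lower_bound (T : eqType) (s : seq T) (f : T -> R) :
  (forall y, y \in s -> 0 < f y) ->
  exists2 eps, 0 < eps & forall y, y \in s -> eps <= f y.
Proof.
elim: s => [|x s IH] f_gt0; first by exists 1.
have [eps eps_gt0 eps_le] : exists2 eps, 0 < eps & forall y, y \in s -> eps <= f y.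
  by apply: IH => y y_in; rewrite f_gt0 // inE y_in orbT.
exists (Num.min (f x) eps) => [|y]; first by rewrite lt_min eps_gt0 f_gt0 ?mem_head.
by rewrite inE => /orP[/eqP->|/eps_le y_ge]; rewrite ge_min ?lexx ?y_ge ?orbT.
Qed.

End MonomialWeights.

Section Cones.
Variables (R : realType) (n : nat) (A : 'X_{1..n} -> Prop).
Implicit Types (g h : {mpoly R[n]}).

Lemma nonneg_cone_coef_ge0 h :
  supported_in A h -> (forall c, c \in msupp h -> 0 <= h@_c) -> nonneg_cone A h.
Proof. by move=> h_supp h_ge0; split=> // x; apply: meval_ge0. Qed.

Lemma interior_cone_coef_gt0 g :
  supported_in A g -> (forall c, A c -> 0 < g@_c) -> interior_cone A g.
Proof.
move=> g_supp g_gt0; have g_gt0' c : c \in msupp g -> 0 < g@_c by move/g_supp/g_gt0.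
split; first by apply: nonneg_cone_coef_ge0 => // c /g_gt0' /ltW.
have [eps eps_gt0 eps_le] := exists_pos_lower_bound g_gt0'.
exists eps; split=> // h h_supp h_near; apply: nonneg_cone_coef_ge0 => // c /h_supp Ac.
have /eps_le : c \in msupp g by rewrite mcoeff_msupp gt_eqF ?g_gt0.
by move: (h_near c Ac); rewrite ltr_norml => /andP[h_ge _]; lra.
Qed.

(* A slight lowering of the coefficient at [b] stays in [C_A]; were that
   coefficient [<= 0], the vertex [b] would make the result negative somewhere. *)
Lemma interior_cone_coef_gt0_at_vertex g b (w : 'I_n -> int) :
  interior_cone A g -> A b ->
  (forall c, A c -> c != b -> mweight w c < mweight w b) -> 0 < g@_b.
Proof.
move=> [[g_supp _] [eps [eps_gt0 g_int]]] Ab vertex_b; rewrite ltNge; apply/negP => gb_le0.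
set h := g - (eps / 2) *: 'X_[b].
have eps2_gt0 : 0 < eps / 2 by rewrite divr_gt0.
have coef_h c : h@_c = g@_c - eps / 2 * (b == c)%:R.
  by rewrite mcoeffB mcoeffZ mcoeffX.
have h_supp : supported_in A h.
  move=> c /msuppB_le; rewrite mem_cat => /orP[/g_supp //|/msuppZ_le].
  by rewrite msuppX inE => /eqP->.
have [_ h_ge0] : nonneg_cone A h.
  apply: g_int => // c _; rewrite coef_h addrC addKr normrN normrM gtr0_norm //.
  by case: (b == c); rewrite ?normr1 ?normr0 ?mulr1 ?mulr0 //; lra.
have hb_lt0 : h@_b < 0 by rewrite coef_h eqxx mulr1; lra.
have [x x_gt0] := meval_lt0_at_vertex hb_lt0 (fun c c_in => vertex_b c (h_supp c c_in)).
by rewrite ltNge h_ge0.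
Qed.

End Cones.

Section Forests.
Variables (V : finType) (n : nat) (ends : 'I_n -> V * V).
Implicit Types (F T : {set 'I_n}).

Definition compl_mnm (S : {set 'I_n}) : 'X_{1..n} := [multinom (i \notin S : nat) | i < n].

Definition link_edges F := [set f | (f \notin F) && spanning_tree ends (f |: F)].

Lemma compl_mnm_eq0 S i : (compl_mnm S i == 0%N) = (i \in S).
Proof. by rewrite mnmE; case: (i \in S). Qed.

Lemma compl_mnm_setU1 e F : e \notin F -> (U_(e) + compl_mnm (e |: F))%MM = compl_mnm F.
Proof.
move=> eF; apply/mnmP => i; rewrite mnmDE mnm1E !mnmE in_setU1.
by case: (eqVneq e i) => [<-|/negbTE ne]; rewrite ?eqxx ?(negbTE eF) // eq_sym ne.
Qed.

Lemma spanning_forest_eq k F F' :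
  spanning_forest ends k F -> spanning_forest ends k F' -> F \subset F' -> F = F'.
Proof.
rewrite /spanning_forest => /andP[_ /eqP cardF] /andP[_ /eqP cardF'] sub.
have card_eq : #|F'| = #|F| by apply/eqP; rewrite -(eqn_add2r k) cardF cardF'.
by apply/eqP; rewrite eqEcard sub card_eq /=.
Qed.

Lemma spanning_tree_link F T :
  spanning_2forest ends F -> spanning_tree ends T -> F \subset T ->
  exists2 f, f \in link_edges F & T = f |: F.
Proof.
rewrite /spanning_2forest /spanning_forest => /andP[_ /eqP cardF] T1 sub.
have /andP[_ /eqP cardT] := T1.
have card_TF : #|T| = #|F|.+1 by apply/eqP; rewrite -(eqn_add2r 1) cardT addn1 -addn2 cardF.
have /properP[_ [f fT fF]] : F \proper T by rewrite properEcard sub card_TF /=.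
have T_def : f |: F = T.
  by apply/eqP; rewrite eqEcard subUset sub sub1set fT cardsU1 fF card_TF add1n ltnSn.
by exists f; rewrite // inE fF T_def.
Qed.

End Forests.

Section SymanzikCoefficients.
Variables (R : realType) (V : finType) (n : nat) (ends : 'I_n -> V * V).
Variables (K : nat) (L : {set 'I_n} -> 'I_K -> R) (E : {set 'I_n}).
Implicit Types (F T : {set 'I_n}) (z : 'I_K -> R) (b c : 'X_{1..n}).

Lemma cmonoE (S : {set 'I_n}) : cmono R S = 'X_[compl_mnm S].
Proof.
rewrite mpolyXE_id /cmono big_mkcond /=; apply: eq_bigr => i _.
by rewrite mnmE; case: (i \notin S); rewrite ?expr1 ?expr0.
Qed.

Definition Lcoef z F : R := \sum_(k < K) L F k * z k.

Definition forest_coef z b : R :=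
  \sum_(F | spanning_2forest ends F) Lcoef z F * (compl_mnm F == b)%:R.

Definition tree_count e b : nat :=
  \sum_(T | spanning_tree ends T) (U_(e) + compl_mnm T == b)%MM.

Lemma mcoeff_symanzikF z m b :
  (symanzikF ends L E z m)@_b = forest_coef z b + \sum_(e in E) m e * (tree_count e b)%:R.
Proof.
rewrite /symanzikF mcoeffD raddf_sum /=; congr (_ + _).
  by apply: eq_bigr => F _; rewrite mcoeffZ cmonoE mcoeffX.
rewrite mulr_suml raddf_sum /=; apply: eq_bigr => e _.
rewrite -scalerAl mcoeffZ /symanzikU mulr_sumr raddf_sum /= natr_sum; congr (_ * _).
by apply: eq_bigr => T _; rewrite cmonoE -mpolyXD mcoeffX.
Qed.

Lemma AG_shape c : AG ends L E c ->
  (exists2 F, spanning_2forest ends F & c = compl_mnm F) \/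
  (exists e T, [/\ e \in E, spanning_tree ends T & c = (U_(e) + compl_mnm T)%MM]).
Proof.
case=> z [m]; rewrite mcoeff_msupp mcoeff_symanzikF => /eqP coef_neq0.
have [/existsP[F /andP[F2 /eqP ->]]|no_forest] :=
  boolP [exists F, spanning_2forest ends F && (c == compl_mnm F)].
  by left; exists F.
have [/existsP[e /existsP[T /and3P[eE T1 /eqP ->]]]|no_tree] :=
  boolP [exists e, exists T, [&& e \in E, spanning_tree ends T & c == (U_(e) + compl_mnm T)%MM]].
  by right; exists e, T.
case: coef_neq0; rewrite big1 ?addr0 => [|e eE].
  apply: big1 => F F2; case: eqP => [cF|]; last by rewrite mulr0.
  by case/negP: no_forest; apply/existsP; exists F; rewrite F2 cF eqxx.
rewrite /tree_count big1 ?mulr0 // => T T1; case: eqP => // cT.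
by case/negP: no_tree; apply/existsP; exists e; apply/existsP; exists T; rewrite eE T1 cT eqxx.
Qed.

Lemma AG_le2 c i : AG ends L E c -> (c i <= 2)%N.
Proof.
case/AG_shape=> [[F _ ->]|[e [T [_ _ ->]]]]; rewrite ?mnmDE ?mnm1E mnmE.
  by case: (i \notin F).
by case: (e == i); case: (i \notin T).
Qed.


(* [forest_weight F] selects the vertex [x^{F^c}] of [A_G]: monomials using an
   edge of [F] are penalised by more than any [c i <= 2] can compensate. *)
Definition forest_weight F (i : 'I_n) : int :=
  (i \in link_edges ends F)%:Z - (2 * n + 1)%N%:Z * (i \in F)%:Z.

Lemma mweight_forest_weight F c :
  mweight (forest_weight F) c = (\sum_(i in link_edges ends F) c i)%N%:Z
    - (2 * n + 1)%N%:Z * (\sum_(i in F) c i)%N%:Z.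
Proof.
have sum_in (A : {set 'I_n}) : \sum_i (i \in A)%:Z * (c i)%:Z = (\sum_(i in A) c i)%N%:Z.
  rewrite -[RHS]natz natr_sum [RHS]big_mkcond /=; apply: eq_bigr => i _.
  by case: (i \in A); rewrite ?mul1r ?mul0r // natz.
rewrite /mweight -!sum_in mulr_sumr -sumrB; apply: eq_bigr => i _.
by rewrite mulrBl mulrA.
Qed.

Lemma mweight_compl_mnm F :
  mweight (forest_weight F) (compl_mnm F) = #|link_edges ends F|%:Z.
Proof.
have sum_F : (\sum_(i in F) compl_mnm F i = 0)%N by apply: big1 => i iF; rewrite mnmE iF.
rewrite mweight_forest_weight sum_F mulr0 subr0 -sum1_card; congr (_%:Z); apply: eq_bigr => i.
by rewrite inE mnmE => /andP[-> _].
Qed.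

Lemma AG_mweight_lt0 F c : AG ends L E c -> (0 < \sum_(i in F) c i)%N ->
  mweight (forest_weight F) c < 0.
Proof.
move=> Ac F_used; rewrite mweight_forest_weight subr_lt0.
have link_sum_le : (\sum_(i in link_edges ends F) c i <= 2 * n)%N.
  apply: (@leq_trans (\sum_(i in link_edges ends F) 2)).
    by apply: leq_sum => i _; exact: AG_le2 Ac.
  rewrite sum_nat_const mulnC leq_mul2l /=.
  by apply: leq_trans (max_card _) _; rewrite card_ord.
rewrite -PoszM ltz_nat; nia.
Qed.

Lemma AG_link_sum_lt F c :
  spanning_2forest ends F -> (forall e, e \in E -> e \notin link_edges ends F) ->
  AG ends L E c -> c != compl_mnm F -> (forall i, i \in F -> c i = 0%N) ->
  (\sum_(i in link_edges ends F) c i < #|link_edges ends F|)%N.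
Proof.
move=> F2 E_link /AG_shape[[F' F2' ->]|[e [T [eE T1 ->]]]] c_neq c_F.
  have sub : F \subset F' by apply/subsetP => i /c_F/eqP; rewrite compl_mnm_eq0.
  by rewrite (spanning_forest_eq F2 F2' sub) eqxx in c_neq.
have sub : F \subset T.
  by apply/subsetP => i /c_F/eqP; rewrite mnmDE addn_eq0 compl_mnm_eq0 => /andP[].
have [f f_link T_def] := spanning_tree_link F2 T1 sub.
have c_link i : i \in link_edges ends F -> (U_(e) + compl_mnm T)%MM i = (i != f).
  move=> i_link; rewrite mnmDE mnm1E mnmE T_def in_setU1.
  have -> : (e == i) = false by apply: contraNF (E_link e eE) => /eqP->.
  by move: i_link; rewrite inE => /andP[/negbTE-> _]; rewrite orbF add0n.
rewrite (eq_bigr _ c_link) (cardD1 f) f_link (bigD1 f) //= eqxx add0n ltnS -sum1_card.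
rewrite [X in (_ <= X)%N](eq_bigl (fun i => (i \in link_edges ends F) && (i != f))).
  by apply: leq_sum => i _; exact: leq_b1.
by move=> i; rewrite !inE andbC.
Qed.

Lemma compl_mnm_AG_vertex F c :
  spanning_2forest ends F -> (forall e, e \in E -> e \notin link_edges ends F) ->
  AG ends L E c -> c != compl_mnm F ->
  mweight (forest_weight F) c < mweight (forest_weight F) (compl_mnm F).
Proof.
move=> F2 E_link Ac c_neq; rewrite mweight_compl_mnm.
have [F_unused|F_used] := posnP (\sum_(i in F) c i); last first.
  by apply: lt_le_trans (AG_mweight_lt0 Ac F_used) _.
rewrite mweight_forest_weight F_unused mulr0 subr0 ltz_nat.
apply: AG_link_sum_lt => // i iF.
by apply/eqP; move/eqP: F_unused; rewrite sum_nat_eq0 => /forall_inP; apply.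
Qed.


Lemma norm_forest_coef_le z b :
  `|forest_coef z b| <= \sum_(F | spanning_2forest ends F) `|Lcoef z F|.
Proof.
apply: le_trans (ler_norm_sum _ _ _) _; apply: ler_sum => F _.
by rewrite normrM; case: (_ == _); rewrite ?normr1 ?normr0 ?mulr1 ?mulr0.
Qed.

Lemma mcoeff_symanzikF_no_tree z m b :
  (forall e, e \in E -> tree_count e b = 0%N) ->
  (symanzikF ends L E z m)@_b = forest_coef z b.
Proof.
by move=> no_tree; rewrite mcoeff_symanzikF big1 ?addr0 // => e /no_tree->; rewrite mulr0.
Qed.

Definition large_mass z : R := 1 + \sum_(F | spanning_2forest ends F) `|Lcoef z F|.

Lemma mcoeff_symanzikF_large_mass z b e :
  e \in E -> (0 < tree_count e b)%N ->
  0 < (symanzikF ends L E z (fun=> large_mass z))@_b.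
Proof.
move=> eE e_tree; rewrite mcoeff_symanzikF -mulr_sumr -natr_sum.
have trees_ge1 : 1 <= (\sum_(e in E) tree_count e b)%:R :> R.
  by rewrite ler1n (bigD1 e) //= ltn_addr.
have mass_ge1 : 1 <= large_mass z by rewrite lerDl sumr_ge0.
have : large_mass z <= large_mass z * (\sum_(e in E) tree_count e b)%:R.
  by rewrite ler_peMr // (le_trans ler01 mass_ge1).
have := norm_forest_coef_le z b; rewrite ler_norml => /andP[coef_ge _].
by rewrite /large_mass in mass_ge1 *; lra.
Qed.

Lemma AG_no_tree_forest b :
  AG ends L E b -> (forall e, e \in E -> tree_count e b = 0%N) ->
  exists2 F, spanning_2forest ends F /\ b = compl_mnm F &
    forall e, e \in E -> e \notin link_edges ends F.
Proof.
have tree_count_gt0 e T : spanning_tree ends T -> (0 < tree_count e (U_(e) + compl_mnm T))%N.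
  by move=> T1; rewrite /tree_count (bigD1 T) //= eqxx.
move=> /AG_shape[[F F2 ->]|[e [T [eE T1 ->]]]] no_tree; last first.
  by have := tree_count_gt0 e T T1; rewrite no_tree.
exists F => // e eE; apply/negP; rewrite inE => /andP[eF eF1].
by have := tree_count_gt0 e _ eF1; rewrite compl_mnm_setU1 // no_tree.
Qed.

End SymanzikCoefficients.

Theorem mainTheorem18 (R : realType) (V : finType) (n : nat)
    (ends : 'I_n -> V * V) (K : nat) (L : {set 'I_n} -> 'I_K -> R)
    (E : {set 'I_n}) :
  graph_connected ends ->
  (exists g, kinspace ends L E g /\ interior_cone (AG ends L E) g) <->
  (exists g, kinspace ends L E g /\
     forall a, AG ends L E a -> 0 < g@_a).
Proof.
move=> _; split.
- case=> _ [[z [m ->]] g_int].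
  exists (symanzikF ends L E z (fun=> large_mass ends L z)).
  split=> [|b Ab]; first by exists z, (fun=> large_mass ends L z).
  have [no_tree|/forall_inPn[e eE e_tree]] :=
    boolP [forall e in E, tree_count ends e b == 0%N].
  + have {}no_tree e : e \in E -> tree_count ends e b = 0%N.
      by move=> eE; apply/eqP; exact: (forall_inP no_tree).
    have [F [F2 bF] E_link] := AG_no_tree_forest Ab no_tree.
    rewrite mcoeff_symanzikF_no_tree // -(mcoeff_symanzikF_no_tree L z m no_tree).
    apply: (interior_cone_coef_gt0_at_vertex (w := forest_weight ends F)) g_int Ab _.
    by move=> c Ac; rewrite bF; apply: compl_mnm_AG_vertex F2 E_link Ac.
  + by apply: mcoeff_symanzikF_large_mass eE _; rewrite lt0n.
- case=> g [g_kin g_gt0]; exists g; split=> //.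
  apply: interior_cone_coef_gt0 => // c c_in.
  by case: g_kin => z [m g_def]; exists z, m; rewrite -g_def.
Qed.
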